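(* Let $K\ge 2$, let $f:\mathbb{R}^3\to\mathbb{R}^K$ be an arbitrary function, and let $\mathbf{p}_1,\mathbf{p}_2\in\mathbb{R}^3$ with $\mathbf{u}_1=f(\mathbf{p}_1)$ and $\mathbf{u}_2=f(\mathbf{p}_2)$ satisfying $\min^{(1)}(\mathbf{u}_i)+\min^{(2)}(\mathbf{u}_i)\ge 0$ for $i=1,2$. Then for every $\alpha\in[0,1]$, the linearly interpolated vector $\mathbf{u}_\alpha=\alpha\mathbf{u}_1+(1-\alpha)\mathbf{u}_2$ (associated with the point $\alpha\mathbf{p}_1+(1-\alpha)\mathbf{p}_2$ on the segment joining $\mathbf{p}_1$ and $\mathbf{p}_2$) also satisfies $\min^{(1)}(\mathbf{u}_\alpha)+\min^{(2)}(\mathbf{u}_\alpha)\ge 0$.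
   Context: For a vector $\mathbf{u}\in\mathbb{R}^K$, $\min^{(n)}(\mathbf{u})$ denotes the $n$-th smallest entry of $\mathbf{u}$ (counted with multiplicity). *)

From mathcomp Require Import all_boot all_order all_algebra.
From mathcomp Require Import reals.
Set Implicit Arguments. Unset Strict Implicit. Unset Printing Implicit Defensive.
Import Order.TTheory GRing.Theory Num.Theory.
Local Open Scope ring_scope.

Definition entries (R : Type) (K : nat) (u : 'rV[R]_K) : seq R :=
  [seq u 0 i | i <- enum 'I_K].

(* min^(n)(u): the n-th smallest entry of u (1-indexed), counted with
   multiplicity: the (n-1)-th element of the nondecreasingly sorted list of
   entries.  Only meaningful for 1 <= n <= K. *)
Definition nth_min (R : realType) (K : nat) (n : nat) (u : 'rV[R]_K) : R :=
  nth 0 (sort <=%R (entries u)) n.-1.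

From mathcomp Require Import all_boot all_order all_algebra.
From mathcomp Require Import reals.
Set Implicit Arguments. Unset Strict Implicit. Unset Printing Implicit Defensive.
Import Order.TTheory GRing.Theory Num.Theory.
Local Open Scope ring_scope.

(* The sum of the two smallest entries of u is the minimum of u_i + u_j over
   pairs of distinct indices, because the n-th smallest entry is <= x exactly
   when at least n entries are <= x.  Nonnegativity of all pairwise sums is
   preserved by convex combinations, since each such sum is affine in u. *)

Lemma sorted_count_le d (T : orderType d) (x0 x : T) (s : seq T) (n : nat) :
  sorted <=%O s ->
  (n < count (fun y => y <= x)%O s)%N = (n < size s)%N && (nth x0 s n <= x)%O.
Proof.
elim: s n => [|a s IHs] n //= a_s.
have s_sorted : sorted <=%O s := path_sorted a_s.
have /allP a_le : all (fun y => a <= y)%O s := order_path_min le_trans a_s.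
have [ax | xa] := leP a x.
  by case: n => [|n] //=; rewrite add1n ltnS IHs.
have -> : count (fun y => y <= x)%O s = 0%N.
  rewrite (@eq_in_count _ _ pred0) ?count_pred0 // => y /a_le ay /=.
  by rewrite leNgt (lt_le_trans xa ay).
case: n => [|n] /=; first by rewrite leNgt xa.
rewrite ltnS; case: (ltnP n (size s)) => //= /(mem_nth x0)/a_le an.
by rewrite leNgt (lt_le_trans xa an).
Qed.

Section TwoSmallestEntries.
Variables (R : realType) (K : nat).
Implicit Types u : 'rV[R]_K.

Lemma card_entries_le u (x : R) (n : nat) :
  (n < #|[pred i : 'I_K | (u 0 i <= x)%R]|)%N = (n < K)%N && (nth_min n.+1 u <= x).
Proof.
have size_sorted : size (sort <=%R (entries u)) = K.
  by rewrite size_sort size_map size_enum_ord.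
rewrite /nth_min -[in (n < K)%N]size_sorted -sorted_count_le; last first.
  exact/sort_sorted/le_total.
by rewrite count_sort /entries count_map enumT cardE /enum_mem size_filter.
Qed.

Lemma nth_min12_le_add u (i j : 'I_K) :
  i != j -> nth_min 1 u + nth_min 2 u <= u 0 i + u 0 j.
Proof.
move=> ij; wlog le_ij : i j ij / u 0 i <= u 0 j => [wlog_ij | ].
  have [|/ltW le_ji] := leP (u 0 i) (u 0 j); first exact: wlog_ij.
  by rewrite [u 0 i + _]addrC wlog_ij // eq_sym.
have min1_i : (0 < #|[pred k : 'I_K | (u 0 k <= u 0 i)%R]|)%N.
  by apply/card_gt0P; exists i; rewrite inE /=.
have min2_j : (1 < #|[pred k : 'I_K | (u 0 k <= u 0 j)%R]|)%N.
  by apply/card_gt1P; exists i, j; rewrite !inE /= le_ij ij.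
rewrite !card_entries_le in min1_i min2_j.
by apply: lerD; [case/andP: min1_i | case/andP: min2_j].
Qed.

Lemma nth_min12_attained (K_ge2 : (2 <= K)%N) u :
  exists i j : 'I_K, i != j /\ u 0 i + u 0 j <= nth_min 1 u + nth_min 2 u.
Proof.
have /card_gt0P[i] : (0 < #|[pred k : 'I_K | (u 0 k <= nth_min 1 u)%R]|)%N.
  by rewrite card_entries_le lexx andbT ltnW.
have /card_gt1P[k [l [+ + kl]]] : (1 < #|[pred k : 'I_K | (u 0 k <= nth_min 2 u)%R]|)%N.
  by rewrite card_entries_le lexx andbT.
rewrite !inE /= => min1_i min2_k min2_l.
have [j [ij min2_j]] : exists j : 'I_K, i != j /\ u 0 j <= nth_min 2 u.
  by have [->|] := eqVneq i k; [exists l | exists k].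
by exists i, j; split; last exact: lerD.
Qed.

Lemma nth_min12_ge0P (K_ge2 : (2 <= K)%N) u :
  (0 <= nth_min 1 u + nth_min 2 u) <-> (forall i j : 'I_K, i != j -> 0 <= u 0 i + u 0 j).
Proof.
split=> [ge0 i j ij | ge0].
  exact: le_trans ge0 (nth_min12_le_add u ij).
have [i [j [ij le_min]]] := nth_min12_attained K_ge2 u.
exact: le_trans (ge0 i j ij) le_min.
Qed.

End TwoSmallestEntries.

Theorem theorem2 (R : realType) (K : nat) (hK : (2 <= K)%N)
    (f : 'rV[R]_3 -> 'rV[R]_K) (p1 p2 : 'rV[R]_3) :
  let u1 := f p1 in
  let u2 := f p2 in
  0 <= nth_min 1 u1 + nth_min 2 u1 ->
  0 <= nth_min 1 u2 + nth_min 2 u2 ->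
  forall alpha : R, 0 <= alpha <= 1 ->
    let ua := alpha *: u1 + (1 - alpha) *: u2 in
    0 <= nth_min 1 ua + nth_min 2 ua.
Proof.
move=> u1 u2 /(nth_min12_ge0P hK) ge0_u1 /(nth_min12_ge0P hK) ge0_u2 alpha.
move=> /andP[alpha_ge0 alpha_le1] /=.
apply/(nth_min12_ge0P hK) => i j ij.
rewrite !mxE addrACA -!mulrDr.
by rewrite addr_ge0 ?mulr_ge0 ?subr_ge0 ?ge0_u1 ?ge0_u2.
Qed.
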